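(* Let $a<b<c$ be elements of $\mathcal{C}_n$. An element $\alpha$ of the triangle $\triangle^{(n)}\{a,b,c\}$ is an idempotent lying in the interior of the triangle if and only if $\alpha$ is a right identity of $\triangle^{(n)}\{a,b,c\}$.
   Context: $\mathcal{C}_n=\{0,1,\dots,n-1\}$ with its usual order; $\widehat{\mathcal{E}}_{\mathcal{C}_n}$ is the set of all order-preserving maps $\mathcal{C}_n\to\mathcal{C}_n$ (not required to fix $0$), a semiring with $(\alpha+\beta)(x)=\max(\alpha(x),\beta(x))$ and $(\alpha\cdot\beta)(x)=\beta(\alpha(x))$. The triangle $\triangle^{(n)}\{a,b,c\}$ is the set of all $\alpha\in\widehat{\mathcal{E}}_{\mathcal{C}_n}$ with image in $\{a,b,c\}$; its interior is the set of its elements whose image is exactly $\{a,b,c\}$ (i.e. not lying in any of the strings of maps with image in $\{a,b\}$, $\{a,c\}$ or $\{b,c\}$). Idempotent means $\alpha\cdot\alpha=\alpha$; a right identity is $e$ with $\beta\cdot e=\beta$ for all $\beta$ in the triangle. *)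

From mathcomp Require Import all_boot.
Set Implicit Arguments. Unset Strict Implicit. Unset Printing Implicit Defensive.

(* C_n = 'I_n with its usual order; endomorphisms are finite functions. *)
Definition endo (n : nat) := {ffun 'I_n -> 'I_n}.

(* order-preserving (not required to fix 0) *)
Definition order_preserving n (f : endo n) : bool :=
  [forall x : 'I_n, forall y : 'I_n, (x <= y) ==> (f x <= f y)].

(* semiring product: (alpha * beta)(x) = beta(alpha(x)) *)
Definition emul n (alpha beta : endo n) : endo n := [ffun x => beta (alpha x)].

Definition im n (alpha : endo n) : {set 'I_n} := [set alpha x | x : 'I_n].

Definition in_triangle n (a b c : 'I_n) (alpha : endo n) : bool :=
  order_preserving alpha && (im alpha \subset [set a; b; c]).

Definition in_interior n (a b c : 'I_n) (alpha : endo n) : bool :=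
  in_triangle a b c alpha && (im alpha == [set a; b; c]).

Definition idempotent_map n (alpha : endo n) : Prop := emul alpha alpha = alpha.

Definition right_identity n (a b c : 'I_n) (e : endo n) : Prop :=
  forall beta : endo n, in_triangle a b c beta -> emul beta e = beta.

From mathcomp Require Import all_boot.
Set Implicit Arguments. Unset Strict Implicit. Unset Printing Implicit Defensive.

(* Both conditions say that alpha fixes every point of {a, b, c}.  A map with
   image in {a, b, c} is idempotent exactly when it fixes its image, so it is
   an idempotent of the interior iff it fixes all of {a, b, c}; and it is a
   right identity iff it fixes the image of every element of the triangle,
   which (testing on the constant maps) again means fixing {a, b, c}. *)

Lemma emul_fixed_im n (alpha beta : endo n) :
  {in im alpha, forall z, beta z = z} -> emul alpha beta = alpha.
Proof. by move=> fix_beta; apply/ffunP=> x; rewrite ffunE fix_beta ?imset_f. Qed.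

Lemma idempotent_mapP n (alpha : endo n) :
  idempotent_map alpha <-> {in im alpha, forall z, alpha z = z}.
Proof.
split; last exact: emul_fixed_im.
by move=> idem _ /imsetP[y _ ->]; have := congr1 (fun f : endo n => f y) idem; rewrite ffunE.
Qed.

Section Triangle.

Variables (n : nat) (a b c : 'I_n).

Local Notation S := [set a; b; c].

Lemma in_triangle_cst d : d \in S -> in_triangle a b c [ffun _ => d].
Proof.
move=> Sd; apply/andP; split.
  by apply/forallP=> x; apply/forallP=> y; rewrite !ffunE leqnn implybT.
by apply/subsetP=> _ /imsetP[y _ ->]; rewrite ffunE.
Qed.

Lemma im_subset_triangle alpha : in_triangle a b c alpha -> im alpha \subset S.
Proof. by case/andP. Qed.

Lemma right_identityP e : right_identity a b c e <-> {in S, forall z, e z = z}.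
Proof.
split=> [rid d Sd | fix_e beta /im_subset_triangle sub_beta].
  by have := congr1 (fun f : endo n => f d) (rid _ (in_triangle_cst Sd)); rewrite !ffunE.
by apply: emul_fixed_im => z /(subsetP sub_beta); apply: fix_e.
Qed.

Lemma idempotent_interiorP alpha : in_triangle a b c alpha ->
  (idempotent_map alpha /\ in_interior a b c alpha) <-> {in S, forall z, alpha z = z}.
Proof.
move=> tri_alpha; have sub_alpha := im_subset_triangle tri_alpha.
split=> [[/idempotent_mapP fix_im /andP[_ /eqP im_alpha]] | fix_alpha].
  by rewrite -im_alpha.
have im_alpha : im alpha = S.
  apply/eqP; rewrite eqEsubset sub_alpha; apply/subsetP=> d Sd.
  by rewrite -(fix_alpha d Sd) imset_f.
split; first by apply/idempotent_mapP; rewrite im_alpha.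
by rewrite /in_interior tri_alpha im_alpha eqxx.
Qed.

End Triangle.

Theorem proposition32 (n : nat) (a b c : 'I_n) (alpha : endo n) :
  a < b -> b < c -> in_triangle a b c alpha ->
  ((idempotent_map alpha /\ in_interior a b c alpha) <-> right_identity a b c alpha).
Proof.
move=> _ _ tri_alpha.
exact: iff_trans (idempotent_interiorP tri_alpha) (iff_sym (right_identityP a b c alpha)).
Qed.
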